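(* Let $R$ be a commutative ring with identity and let $(S,\leq)$ be a strictly ordered monoid. Suppose $S=S_1\sqcup S_2$ is a disjoint union of subsets $S_1,S_2$. Define $P:[[R^{S,\leq}]]\to[[R^{S,\leq}]]$ by $$P(f)(s)=\begin{cases} f(s), & s\in S_1,\\ 0, & s\in S_2,\end{cases}\qquad f\in [[R^{S,\leq}]],\ s\in S.$$ Then $([[R^{S,\leq}]],P)$ is a Rota-Baxter algebra (of weight $-1$) if and only if $S_1$ and $S_2$ are both subsemigroups of $S$ (i.e. each is closed under the monoid operation).
   Context: All monoids are commutative and written additively with neutral element $0$. An ordered set means a partially ordered set; it is artinian if every strictly decreasing sequence is finite, and narrow if every subset of pairwise incomparable elements is finite. A strictly ordered monoid is a commutative monoid $S$ with a partial order $\leq$ such that $s<s'$ implies $s+t<s'+t$ for all $s,s',t\in S$. The ring of generalized power series $[[R^{S,\leq}]]$ is the set of all maps $f:S\to R$ whose support $\mathrm{supp}(f)=\{s\in S: f(s)\neq 0\}$ is artinian and narrow, with pointwise addition and convolution product $(fg)(s)=\sum_{(u,v)} f(u)g(v)$, the sum over the (finite) set of pairs $(u,v)\in S\times S$ with $u+v=s$, $f(u)\neq0$, $g(v)\neq 0$. A Rota-Baxter algebra (of weight $-1$) is an associative $R$-algebra $A$ with an $R$-linear operator $P:A\to A$ satisfying $P(x)P(y)=P(xP(y))+P(P(x)y)-P(xy)$ for all $x,y\in A$. *)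

From HB Require Import structures.
From mathcomp Require Import all_boot all_order all_algebra.
From mathcomp Require Import boolp classical_sets cardinality fsbigop.
Set Implicit Arguments. Unset Strict Implicit. Unset Printing Implicit Defensive.
Import Order.TTheory GRing.Theory Num.Theory.
Local Open Scope classical_set_scope.
Local Open Scope ring_scope.

Section GPS.
Variables (S : nmodType) (le : S -> S -> Prop).

Definition slt (x y : S) : Prop := le x y /\ x <> y.

Definition strictly_ordered_monoid : Prop :=
  [/\ (forall x, le x x),
      (forall x y, le x y -> le y x -> x = y),
      (forall x y z, le x y -> le y z -> le x z) &
      (forall s s' t, slt s s' -> slt (s + t) (s' + t))].

Definition artinian (A : set S) : Prop :=
  ~ exists u : nat -> S, (forall n, A (u n)) /\ (forall n, slt (u n.+1) (u n)).

Definition narrow (A : set S) : Prop :=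
  forall B : set S, B `<=` A ->
    (forall x y, B x -> B y -> x <> y -> ~ le x y /\ ~ le y x) ->
    finite_set B.

Variable R : comNzRingType.

Definition supp (f : S -> R) : set S := [set s | f s != 0].

(* membership in the ring of generalized power series [[R^{S,le}]] *)
Definition is_gps (f : S -> R) : Prop := artinian (supp f) /\ narrow (supp f).

(* convolution product: sum over the (finite, for f g in [[R^{S,le}]]) set of
   pairs (u,v) with u + v = s, f u <> 0, g v <> 0 *)
Definition gps_mul (f g : S -> R) (s : S) : R :=
  \sum_(p \in [set p : S * S | p.1 + p.2 = s /\ f p.1 != 0 /\ g p.2 != 0])
     (f p.1 * g p.2).

Definition proj_op (S1 : set S) (f : S -> R) (s : S) : R :=
  if `[< S1 s >] then f s else 0.

Definition rota_baxter_gps (P : (S -> R) -> (S -> R)) : Prop :=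
  (forall (a : R) f g, is_gps f -> is_gps g ->
      P (fun s => a * f s + g s) = (fun s => a * P f s + P g s)) /\
  (forall f g, is_gps f -> is_gps g ->
      gps_mul (P f) (P g) =
      (fun s => P (gps_mul f (P g)) s + P (gps_mul (P f) g) s - P (gps_mul f g) s)).

Definition subsemigroup (A : set S) : Prop :=
  forall x y, A x -> A y -> A (x + y).

End GPS.

From HB Require Import structures.
From mathcomp Require Import all_boot all_order all_algebra.
From mathcomp Require Import finmap boolp classical_sets functions cardinality fsbigop.
Set Implicit Arguments. Unset Strict Implicit. Unset Printing Implicit Defensive.
Import Order.TTheory GRing.Theory Num.Theory.
Local Open Scope classical_set_scope.
Local Open Scope ring_scope.

(* Necessity: evaluating the Rota-Baxter identity for the monomials X^x, X^y at
   x + y gives 1 = 0 if x, y lie in S1 but x + y does not, and 0 = -1 if x, y lie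
   in S2 but x + y does not.
   Sufficiency: at a point s outside S1 both sides vanish, since no pair of
   points of S1 sums to s.  At s in S1 the identity reduces, pair by pair
   (u, v) with u + v = s, to [1_S1 u * 1_S1 v = 1_S1 u + 1_S1 v - 1], which holds
   because u and v cannot both lie in S2.  Comparing the four convolutions
   term by term needs the set of such pairs to be finite; this is where the
   artinian and narrow conditions enter, through the usual Ramsey argument:
   every sequence in an artinian narrow set has a nondecreasing subsequence. *)

Lemma nat_rel_free_or_path (r : nat -> nat -> Prop) :
  (exists phi : nat -> nat, {homo phi : i j / (i < j)%N} /\
     forall i j, (i < j)%N -> ~ r (phi i) (phi j)) \/
  (exists phi : nat -> nat, {homo phi : i j / (i < j)%N} /\
     forall k, r (phi k) (phi k.+1)).
Proof.
pose terminal i := forall j, (i < j)%N -> ~ r i j.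
have [unbounded|] := pselect (forall n, exists i, (n <= i)%N /\ terminal i).
  have [next Hnext] := choice unbounded.
  pose phi := fix phi k := if k is k'.+1 then next (phi k').+1 else next 0%N.
  have phi_incr : {homo phi : i j / (i < j)%N}.
    by apply: homo_ltn ltn_trans _ => k; exact: (Hnext _).1.
  left; exists phi; split => // i j /phi_incr.
  by case: i => [|i]; [exact: (Hnext 0%N).2 | exact: (Hnext _).2].
move=> /existsNP[n Hn]; right.
have step i : exists j, (n <= i)%N -> (i < j)%N /\ r i j.
  have [ni|_] := boolP (n <= i)%N; last by exists 0%N.
  have : ~ terminal i by move=> Ti; apply: Hn; exists i.
  by move=> /existsNP[j /not_implyP[ij /contrapT rij]]; exists j.
have [succ Hsucc] := choice step.
pose phi := fix phi k := if k is k'.+1 then succ (phi k') else n.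
have phi_ge k : (n <= phi k)%N.
  elim: k => [|k IH] //=; exact: leq_trans IH (ltnW (Hsucc _ IH).1).
exists phi; split; last by move=> k; exact: (Hsucc _ (phi_ge k)).2.
by apply: homo_ltn ltn_trans _ => k; exact: (Hsucc _ (phi_ge k)).1.
Qed.

Lemma infinite_set_injseq (T : choiceType) (A : set T) : infinite_set A ->
  exists u : nat -> T, (forall n, A (u n)) /\ injective u.
Proof.
elim/choicePpointed: T => T in A *; first by rewrite emptyE => /(_ (finite_set0 _)).
move=> /infiniteP/ppcard_leP[f]; exists (fun n => f n); split.
  by move=> n; apply: funS.
by move=> m n; apply: inj; rewrite ?inE.
Qed.

Section ArtinianNarrow.
Variables (S : nmodType) (le : S -> S -> Prop).
Hypothesis le_refl : forall x, le x x.
Hypothesis le_trans : forall y x z, le x y -> le y z -> le x z.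

Lemma artinian_narrow_good_seq (A : set S) : artinian le A -> narrow le A ->
  forall u : nat -> S, (forall n, A (u n)) -> exists i j, (i < j)%N /\ le (u i) (u j).
Proof.
move=> art nar u Au; apply: contrapT => bad.
have not_le i j : (i < j)%N -> ~ le (u i) (u j) by move=> ij lij; apply: bad; exists i, j.
have [[phi [phi_incr no_descent]]|[phi [_ descent]]] :=
  nat_rel_free_or_path (fun i j => slt le (u j) (u i)); last first.
  by apply: art; exists (u \o phi); split=> // n; exact: Au.
have incomparable i j : i <> j -> ~ le (u (phi i)) (u (phi j)).
  move=> /eqP; rewrite neq_ltn => /orP[ij|ji] lij.
    exact: not_le _ _ (phi_incr _ _ ij) lij.
  have [e|ne] := pselect (u (phi j) = u (phi i)).
    by apply: (not_le _ _ (phi_incr _ _ ji)); rewrite e.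
  by apply: (no_descent _ _ ji); split => //; apply/nesym.
have uphi_inj : injective (u \o phi).
  move=> i j eij; apply: contrapT => /incomparable; apply.
  by move: eij => /= ->.
have : finite_set ((u \o phi) @` [set: nat]).
  apply: nar => [_ [n _ <-]|_ _ [i _ <-] [j _ <-] neq]; first exact: Au.
  have nij : i <> j by move=> ij; apply: neq; rewrite ij.
  by split; apply: incomparable => // ji; apply: nij.
rewrite (eq_finite_set (inj_card_eq _)); first exact: infinite_nat.
by move=> i j _ _; apply: uphi_inj.
Qed.

Lemma artinian_narrow_nondecreasing_subseq (A : set S) :
  artinian le A -> narrow le A ->
  forall u : nat -> S, (forall n, A (u n)) ->
  exists phi : nat -> nat, {homo phi : i j / (i < j)%N} /\
    {homo u \o phi : i j / (i <= j)%N >-> le i j}.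
Proof.
move=> art nar u Au.
have [[phi [_ free]]|[phi [phi_incr path]]] :=
  nat_rel_free_or_path (fun i j => le (u i) (u j)).
  have [i [j [ij lij]]] := artinian_narrow_good_seq art nar (fun n => Au (phi n)).
  by have := free _ _ ij.
by exists phi; split => //; apply: homo_leq.
Qed.

End ArtinianNarrow.

Section StrictlyOrderedMonoid.
Variables (S : nmodType) (le : S -> S -> Prop).
Hypothesis som : strictly_ordered_monoid le.

Lemma som_refl x : le x x. Proof. by case: som. Qed.

Lemma som_trans y x z : le x y -> le y z -> le x z.
Proof. by case: som => _ _ + _; apply. Qed.

Lemma som_anti x y : le x y -> le y x -> x = y.
Proof. by case: som => _ + _ _; apply. Qed.

Lemma som_ltD2r t s s' : slt le s s' -> slt le (s + t) (s' + t).
Proof. by case: som => _ _ _; apply. Qed.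

Lemma som_leD2r t s s' : le s s' -> le (s + t) (s' + t).
Proof.
move=> ss'; have [->|ns] := pselect (s = s'); first exact: som_refl.
by have [] := som_ltD2r t (conj ss' ns).
Qed.

Lemma som_leD_eq a a' b b' :
  le a a' -> le b b' -> a + b = a' + b' -> a = a' /\ b = b'.
Proof.
move=> aa' bb' e; have [ea|na] := pselect (a = a').
  subst a'; split => //; apply: contrapT => nb.
  have [_] := som_ltD2r a (conj bb' nb).
  by rewrite addrC e addrC.
have [le_ab ne_ab] := som_ltD2r b (conj aa' na); exfalso; apply: ne_ab.
apply: som_anti le_ab _; rewrite e [a' + b]addrC [a' + b']addrC.
exact: som_leD2r.
Qed.

Lemma finite_pairs_with_sum (A B : set S) s :
  artinian le A -> narrow le A -> artinian le B -> narrow le B ->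
  finite_set [set p : S * S | p.1 + p.2 = s /\ A p.1 /\ B p.2].
Proof.
move=> artA narA artB narB; apply: contrapT => /infinite_set_injseq[p [Hp p_inj]].
have [phi [phi_incr le1]] := artinian_narrow_nondecreasing_subseq som_refl
  som_trans artA narA (u := fun n => (p n).1) (fun n => (Hp n).2.1).
have [psi [psi_incr le2]] := artinian_narrow_nondecreasing_subseq som_refl
  som_trans artB narB (u := fun n => (p (phi n)).2) (fun n => (Hp _).2.2).
have lt01 : (psi 0 < psi 1)%N by apply: psi_incr.
have [eq1 eq2] := som_leD_eq (le1 _ _ (ltnW lt01)) (le2 0%N 1%N isT)
  (etrans (Hp _).1 (esym (Hp _).1)).
have /p_inj/eqP := @injective_projections _ _ _ _ eq1 eq2.
by rewrite (ltn_eqF (phi_incr _ _ lt01)).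
Qed.

End StrictlyOrderedMonoid.

Section Convolution.
Variables (R : comNzRingType) (S : nmodType).

Definition monomial (x : S) : S -> R := fun s => (s == x)%:R.

Lemma monomial_neq0 x s : (monomial x s != 0) = (s == x).
Proof. by rewrite /monomial; case: (s == x); rewrite ?oner_neq0 ?eqxx. Qed.

Lemma is_gps_monomial (le : S -> S -> Prop) x : is_gps le (monomial x).
Proof.
have supp_monomial : supp (monomial x) = [set x].
  by apply/seteqP; split => s; rewrite /supp /= monomial_neq0 => /eqP.
rewrite /is_gps supp_monomial; split.
  by move=> [u [Hu /(_ 0%N) [_]]]; rewrite (Hu 0%N) (Hu 1%N).
by move=> B /sub_finite_set + _; apply; exact: finite_set1.
Qed.

Lemma gps_mul_monomial x y : gps_mul (monomial x) (monomial y) (x + y) = 1.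
Proof.
rewrite /gps_mul.
have -> : [set p : S * S | p.1 + p.2 = x + y /\
            monomial x p.1 != 0 /\ monomial y p.2 != 0] = [set (x, y)].
  apply/seteqP; split => [[a b] /= [_ []]|[a b] /= [-> ->]].
    by rewrite !monomial_neq0 => /eqP -> /eqP ->.
  by rewrite !monomial_neq0 !eqxx.
by rewrite fsbig_set1 /monomial /= !eqxx mulr1.
Qed.

Lemma gps_mul0l g : gps_mul (fun _ : S => 0 : R) g = fun _ => 0.
Proof. by apply/funext => s; rewrite /gps_mul fsbig1 // => i _; rewrite mul0r. Qed.

Lemma gps_mul0r f : gps_mul f (fun _ : S => 0 : R) = fun _ => 0.
Proof. by apply/funext => s; rewrite /gps_mul fsbig1 // => i _; rewrite mulr0. Qed.

(* The convolution itself is junk (zero) when its index set is infinite, so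
   sums over a common index set need that set to be finite. *)
Lemma gps_mul_sub_supp (f g f' g' : S -> R) s :
  supp f' `<=` supp f -> supp g' `<=` supp g ->
  finite_set [set p : S * S | p.1 + p.2 = s /\ f p.1 != 0 /\ g p.2 != 0] ->
  gps_mul f' g' s =
  \sum_(p <- fset_set [set p : S * S | p.1 + p.2 = s /\ f p.1 != 0 /\ g p.2 != 0])
     f' p.1 * g' p.2.
Proof.
move=> ff' gg' fin; rewrite /gps_mul -fsbig_finite //.
apply: fsbig_widen => [[a b] /= [-> [fa gb]]|[a b] [[e _] nfg]].
  by split => //; split; [exact: ff' | exact: gg'].
rewrite /preimage /=; have [->|fa'] := eqVneq (f' a) 0; first by rewrite mul0r.
have [->|gb'] := eqVneq (g' b) 0; first by rewrite mulr0.
by exfalso; apply: nfg.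
Qed.

End Convolution.

Lemma setC_partition (T : Type) (A B : set T) :
  A `|` B = setT -> A `&` B = set0 -> B = ~` A.
Proof.
move=> AUB AIB; apply/seteqP; split; first by apply/disjoints_subset; rewrite setIC.
by move=> x nAx; have [] : (A `|` B) x by rewrite AUB.
Qed.

Section Projection.
Variables (R : comNzRingType) (S : nmodType) (S1 : set S).
Local Notation P := (@proj_op S R S1).

Lemma proj_op_in f s : S1 s -> P f s = f s.
Proof. by rewrite /proj_op; case: asboolP. Qed.

Lemma proj_op_notin f s : ~ S1 s -> P f s = 0.
Proof. by rewrite /proj_op; case: asboolP. Qed.

Lemma supp_proj_op f : supp (P f) `<=` supp f.
Proof.
move=> s; rewrite /supp /=; have [/proj_op_in -> //|/proj_op_notin ->] := pselect (S1 s).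
by rewrite eqxx.
Qed.

Lemma proj_op_monomial_in x : S1 x -> P (monomial R x) = monomial R x.
Proof.
move=> x1; apply/funext => s; have [/proj_op_in -> //|ns] := pselect (S1 s).
by rewrite proj_op_notin // /monomial; case: eqP => // e; case: ns; rewrite e.
Qed.

Lemma proj_op_monomial_notin x : ~ S1 x -> P (monomial R x) = fun _ => 0.
Proof.
move=> nx; apply/funext => s; have [s1|/proj_op_notin -> //] := pselect (S1 s).
by rewrite proj_op_in // /monomial; case: eqP => // e; case: nx; rewrite -e.
Qed.

Lemma rota_baxter_proj_op_subsemigroup (le : S -> S -> Prop) :
  rota_baxter_gps le P -> subsemigroup S1 /\ subsemigroup (~` S1).
Proof.
move=> [_ rb]; split => x y Sx Sy; apply: contrapT => Sxy;
  have := congr1 (fun F => F (x + y))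
    (rb _ _ (is_gps_monomial R le x) (is_gps_monomial R le y)).
  rewrite /= !proj_op_monomial_in // gps_mul_monomial !proj_op_notin //.
  by rewrite addr0 subr0 => /eqP; rewrite oner_eq0.
have xy1 : S1 (x + y) by apply: contrapT.
rewrite /= !proj_op_monomial_notin // !gps_mul0l gps_mul0r !proj_op_in //.
by rewrite gps_mul_monomial add0r sub0r => /eqP; rewrite eq_sym oppr_eq0 oner_eq0.
Qed.

Lemma gps_mul_proj_op_notin f g s :
  subsemigroup S1 -> ~ S1 s -> gps_mul (P f) (P g) s = 0.
Proof.
move=> S1_add ns; rewrite /gps_mul fsbig1 // => -[a b] /= [e [fa gb]].
have [a1|/proj_op_notin a0] := pselect (S1 a); last by rewrite a0 eqxx in fa.
have [b1|/proj_op_notin b0] := pselect (S1 b); last by rewrite b0 eqxx in gb.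
by case: ns; rewrite -e; apply: S1_add.
Qed.

Lemma proj_op_mul_weight f g a b : subsemigroup (~` S1) -> S1 (a + b) ->
  P f a * P g b = f a * P g b + P f a * g b - f a * g b.
Proof.
move=> S2_add ab1; have [a1|a2] := pselect (S1 a); have [b1|b2] := pselect (S1 b).
- by rewrite !proj_op_in // addrK.
- by rewrite (proj_op_in f a1) (proj_op_notin g b2) mulr0 add0r subrr.
- by rewrite (proj_op_notin f a2) (proj_op_in g b1) mul0r addr0 subrr.
- by case: (S2_add a b a2 b2).
Qed.

Lemma subsemigroup_rota_baxter_proj_op (le : S -> S -> Prop) :
  strictly_ordered_monoid le -> subsemigroup S1 -> subsemigroup (~` S1) ->
  rota_baxter_gps le P.
Proof.
move=> som S1_add S2_add; split.
  move=> a f g _ _; apply/funext => s; have [s1|ns] := pselect (S1 s).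
    by rewrite !proj_op_in.
  by rewrite !proj_op_notin // mulr0 addr0.
move=> f g [art_f nar_f] [art_g nar_g]; apply/funext => s.
have [s1|ns] := pselect (S1 s); last first.
  by rewrite gps_mul_proj_op_notin // !proj_op_notin // addr0 subr0.
have fin := finite_pairs_with_sum som s art_f nar_f art_g nar_g.
have Pf_f := supp_proj_op (f := f); have Pg_g := supp_proj_op (f := g).
rewrite !proj_op_in // !(gps_mul_sub_supp _ _ fin) //.
rewrite -big_split -sumrB /=; apply: eq_big_seq => -[a b].
by rewrite in_fset_set // inE /= => -[e _]; apply: proj_op_mul_weight; rewrite ?e.
Qed.

End Projection.

Theorem theorem2p1 (R : comNzRingType) (S : nmodType) (le : S -> S -> Prop)
  (S1 S2 : set S) :
  strictly_ordered_monoid le ->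
  S1 `|` S2 = setT -> S1 `&` S2 = set0 ->
  (rota_baxter_gps le (@proj_op S R S1) <-> subsemigroup S1 /\ subsemigroup S2).
Proof.
move=> som S12 S1S2; rewrite (setC_partition S12 S1S2); split.
  exact: rota_baxter_proj_op_subsemigroup.
by case; exact: subsemigroup_rota_baxter_proj_op.
Qed.
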